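(* Let $(L,[\cdot,\cdot],\cdot,\alpha)$ be a multiplicative Hom-post-Lie algebra and let $k$ be a non-negative integer. Define $\{x,y\}:=[\alpha^k(x),y]$ and $x\ast y:=\alpha^k(x)\cdot y$ for $x,y\in L$. Then $(L,\{\cdot,\cdot\},\ast,\alpha)$ (i.e. $L$ with $\diamond=\{\cdot,\cdot\}$, $\bullet=\ast$ and structure map $\alpha$) is a module over the Hom-post-Lie algebra $(L,[\cdot,\cdot],\cdot,\alpha)$.
   Context: All vector spaces are over a field $\mathbb{K}$ of characteristic $\neq 2$. A Hom-Lie algebra is $(L,[\cdot,\cdot],\alpha)$ with $[\cdot,\cdot]$ bilinear and skew-symmetric, $\alpha$ linear, and $[\alpha(x),[y,z]]+[\alpha(y),[z,x]]+[\alpha(z),[x,y]]=0$. A Hom-post-Lie algebra $(L,[\cdot,\cdot],\cdot,\alpha)$ is a Hom-Lie algebra with a bilinear $\cdot$ such that for all $x,y,z$: $\alpha(z)\cdot[x,y]-[z\cdot x,\alpha(y)]-[\alpha(x),z\cdot y]=0$ and $\alpha(z)\cdot(y\cdot x)-\alpha(y)\cdot(z\cdot x)+(y\cdot z)\cdot\alpha(x)-(z\cdot y)\cdot\alpha(x)+[y,z]\cdot\alpha(x)=0$. It is multiplicative if $\alpha([x,y])=[\alpha(x),\alpha(y)]$ and $\alpha(x\cdot y)=\alpha(x)\cdot\alpha(y)$. A module over $L$ is a vector space $M$ with linear $\alpha_M:M\to M$ and bilinear $\diamond,\bullet:L\otimes M\to M$ such that for all $x,y\in L$, $m\in M$: (i)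 $\alpha_M(x\diamond m)=\alpha(x)\diamond\alpha_M(m)$, $\alpha_M(x\bullet m)=\alpha(x)\bullet\alpha_M(m)$; (ii) $[x,y]\diamond\alpha_M(m)=\alpha(x)\diamond(y\diamond m)-\alpha(y)\diamond(x\diamond m)$; (iii) $(x\cdot y)\diamond\alpha_M(m)=\alpha(x)\bullet(y\diamond m)-\alpha(y)\diamond(x\bullet m)$; (iv) $[x,y]\bullet\alpha_M(m)=\alpha(x)\bullet(y\bullet m)-\alpha(y)\bullet(x\bullet m)-(x\cdot y)\bullet\alpha_M(m)+(y\cdot x)\bullet\alpha_M(m)$. *)

From HB Require Import structures.
From mathcomp Require Import all_boot all_order all_algebra.
Set Implicit Arguments. Unset Strict Implicit. Unset Printing Implicit Defensive.
Import GRing.Theory.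
Local Open Scope ring_scope.

Definition is_linear (K : fieldType) (V W : lmodType K) (f : V -> W) : Prop :=
  forall (a : K) (x y : V), f (a *: x + y) = a *: f x + f y.

Definition is_bilinear (K : fieldType) (U V W : lmodType K) (b : U -> V -> W) : Prop :=
  (forall y, is_linear (fun x => b x y)) /\ (forall x, is_linear (b x)).

Definition is_HomLie (K : fieldType) (L : lmodType K)
  (br : L -> L -> L) (alpha : L -> L) : Prop :=
  [/\ is_bilinear br,
      (forall x y, br x y = - br y x),
      is_linear alpha &
      (forall x y z, br (alpha x) (br y z) + br (alpha y) (br z x)
                     + br (alpha z) (br x y) = 0)].

Definition is_HomPostLie (K : fieldType) (L : lmodType K)
  (br : L -> L -> L) (dot : L -> L -> L) (alpha : L -> L) : Prop :=
  [/\ is_HomLie br alpha,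
      is_bilinear dot,
      (forall x y z, dot (alpha z) (br x y) - br (dot z x) (alpha y)
                     - br (alpha x) (dot z y) = 0) &
      (forall x y z, dot (alpha z) (dot y x) - dot (alpha y) (dot z x)
                     + dot (dot y z) (alpha x) - dot (dot z y) (alpha x)
                     + dot (br y z) (alpha x) = 0)].

Definition is_multiplicative (K : fieldType) (L : lmodType K)
  (br : L -> L -> L) (dot : L -> L -> L) (alpha : L -> L) : Prop :=
  (forall x y, alpha (br x y) = br (alpha x) (alpha y)) /\
  (forall x y, alpha (dot x y) = dot (alpha x) (alpha y)).

Definition is_HomPostLie_module (K : fieldType) (L M : lmodType K)
  (br : L -> L -> L) (dot : L -> L -> L) (alpha : L -> L)
  (alphaM : M -> M) (dia bul : L -> M -> M) : Prop :=
  [/\ is_linear alphaM, is_bilinear dia & is_bilinear bul] /\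
  [/\ (forall x m, alphaM (dia x m) = dia (alpha x) (alphaM m)),
      (forall x m, alphaM (bul x m) = bul (alpha x) (alphaM m)),
      (forall x y m, dia (br x y) (alphaM m) =
                     dia (alpha x) (dia y m) - dia (alpha y) (dia x m)),
      (forall x y m, dia (dot x y) (alphaM m) =
                     bul (alpha x) (dia y m) - dia (alpha y) (bul x m)) &
      (forall x y m, bul (br x y) (alphaM m) =
                     bul (alpha x) (bul y m) - bul (alpha y) (bul x m)
                     - bul (dot x y) (alphaM m) + bul (dot y x) (alphaM m))].

(* The adjoint action ([x,m], x·m) makes a multiplicative Hom-post-Lie algebra
   a module over itself: the module axioms (ii)–(iv) are the Hom-Jacobi identity
   and the two Hom-post-Lie identities, rearranged.  Precomposing the actions of
   any module with an endomorphism of (L, [.,.], ., α) commuting with α again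
   gives a module, and α^k is such an endomorphism by multiplicativity. *)
From mathcomp Require Import all_boot all_order all_algebra.
Local Open Scope ring_scope.
Import GRing.Theory.
Set Implicit Arguments. Unset Strict Implicit.

Section LinearMaps.
Variables (K : fieldType) (V W : lmodType K) (f : V -> W).
Hypothesis f_lin : is_linear f.

Lemma is_linear0 : f 0 = 0.
Proof.
have := f_lin 1 0 0; rewrite !scale1r addr0 => /esym/(canRL (addrK (f 0))).
by rewrite subrr.
Qed.

Lemma is_linearN x : f (- x) = - f x.
Proof. by rewrite -scaleN1r -[_ *: x]addr0 f_lin is_linear0 addr0 scaleN1r. Qed.

End LinearMaps.

Lemma iter_linear (K : fieldType) (V : lmodType K) (f : V -> V) k :
  is_linear f -> is_linear (iter k f).
Proof. by move=> f_lin a x y; elim: k => //= k ->; rewrite f_lin. Qed.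

Lemma iter_morph2 (T : Type) (f : T -> T) (op : T -> T -> T) k :
  (forall x y, f (op x y) = op (f x) (f y)) ->
  forall x y, iter k f (op x y) = op (iter k f x) (iter k f y).
Proof. by move=> f_morph x y; elim: k => //= k ->; rewrite f_morph. Qed.

Section HomPostLieModules.
Variables (K : fieldType) (L : lmodType K).
Variables (br dot : L -> L -> L) (alpha : L -> L).

Lemma HomPostLie_module_adjoint :
  is_HomPostLie br dot alpha -> is_multiplicative br dot alpha ->
  is_HomPostLie_module br dot alpha alpha br dot.
Proof.
move=> [[br_bilin br_skew alpha_lin jacobi] dot_bilin post1 post2] [alpha_br alpha_dot].
split; first by split.
split=> // x y m.
- have := jacobi x y m.
  rewrite [br m x]br_skew [br (alpha m) _]br_skew (is_linearN (br_bilin.2 _)).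
  by move/subr0_eq/esym.
- by have := post1 y m x; rewrite addrAC => /subr0_eq/esym.
- have := post2 m x y.
  move/eqP; rewrite addrC addr_eq0 => /eqP ->.
  by rewrite !opprD !opprK [- _ + _]addrC.
Qed.

Lemma HomPostLie_module_comp (M : lmodType K) (alphaM : M -> M)
    (dia bul : L -> M -> M) (phi : L -> L) :
  is_HomPostLie_module br dot alpha alphaM dia bul ->
  is_linear phi ->
  (forall x y, phi (br x y) = br (phi x) (phi y)) ->
  (forall x y, phi (dot x y) = dot (phi x) (phi y)) ->
  (forall x, phi (alpha x) = alpha (phi x)) ->
  is_HomPostLie_module br dot alpha alphaM
    (fun x m => dia (phi x) m) (fun x m => bul (phi x) m).
Proof.
move=> [[alphaM_lin [dia_l dia_r] [bul_l bul_r]] [dia_alpha bul_alpha dia_br dia_dot bul_br]]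
  phi_lin phi_br phi_dot phi_alpha.
split; first split=> //.
- by split=> [y a x z | x] /=; rewrite ?phi_lin ?dia_l.
- by split=> [y a x z | x] /=; rewrite ?phi_lin ?bul_l.
split=> [x m | x m | x y m | x y m | x y m]; rewrite ?phi_br ?phi_dot !phi_alpha.
- exact: dia_alpha.
- exact: bul_alpha.
- exact: dia_br.
- exact: dia_dot.
- exact: bul_br.
Qed.

End HomPostLieModules.

Theorem mainTheorem2 (K : fieldType) (hK : (2%N \notin [pchar K]))
  (L : lmodType K) (br dot : L -> L -> L) (alpha : L -> L) (k : nat) :
  is_HomPostLie br dot alpha -> is_multiplicative br dot alpha ->
  is_HomPostLie_module br dot alpha alpha
    (fun x y => br (iter k alpha x) y) (fun x y => dot (iter k alpha x) y).
Proof.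
(* [hK] is a standing assumption of the paper; this result does not need it. *)
move=> postLie mult; have [alpha_br alpha_dot] := mult.
have [[_ _ alpha_lin _] _ _ _] := postLie.
apply: HomPostLie_module_comp.
- exact: HomPostLie_module_adjoint.
- exact: iter_linear alpha_lin.
- exact: iter_morph2 alpha_br.
- exact: iter_morph2 alpha_dot.
- by move=> x; rewrite -iterSr.
Qed.
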